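(* Let $\mu$ be a signature and let $\mathcal A$ be an ideal of $\Omega_\mu$ which has the amalgamation property and satisfies $|\mathcal A|\le\aleph_1$. Then $\mathcal A$ is representable, i.e. there is a relational structure $\mathfrak A$ of signature $\mu$ with $\mathrm{age}(\mathfrak A)=\mathcal A$.
   Context: A signature is a map $\mu:I\to\mathbb{N}^*$; relational structures of signature $\mu$, embeddings, embeddability $\le$, $\Omega_\mu$ (isomorphism types of finite structures of signature $\mu$ ordered by $\le$), ideals (non-empty, downward closed, up-directed subsets) and ages (sets of isomorphism types of finite induced substructures) are as usual. $\mathcal A$ has the amalgamation property if for all embeddings $f_1:\mathfrak A\to\mathfrak A_1$, $f_2:\mathfrak A\to\mathfrak A_2$ with $\mathfrak A,\mathfrak A_1,\mathfrak A_2$ of type in $\mathcal A$ there are embeddings $g_1:\mathfrak A_1\to\mathfrak B$, $g_2:\mathfrak A_2\to\mathfrak B$ with $\mathfrak B$ of type in $\mathcal A$ and $g_1\circ f_1=g_2\circ f_2$. *)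

From Stdlib Require Import Wellfounded.
From mathcomp Require Import all_boot.

Set Implicit Arguments.
Unset Strict Implicit.
Unset Printing Implicit Defensive.

Record structure (I : Type) (mu : I -> nat) := Structure {
  carrier :> Type;
  rel : forall i : I, (mu i).-tuple carrier -> Prop
}.

Section Defs.
Variables (I : Type) (mu : I -> nat).

Definition embedding (A B : structure mu) (f : A -> B) : Prop :=
  injective f /\
  forall (i : I) (t : (mu i).-tuple A), @rel I mu A i t <-> @rel I mu B i (map_tuple f t).

Definition embeds (A B : structure mu) : Prop := exists f : A -> B, embedding f.

(* Finite structures, with carrier {0,...,n-1} (every finite structure is
   isomorphic to one of these; n = 0 gives the empty structure). *)
Definition fstruct : Type :=
  { n : nat & forall i : I, (mu i).-tuple 'I_n -> Prop }.

Definition fs (F : fstruct) : structure mu :=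
  @Structure I mu 'I_(projT1 F) (projT2 F).

Definition iso (F G : fstruct) : Prop :=
  exists f : fs F -> fs G, embedding f /\ forall y, exists x, f x = y.

(* Embeddability <= on finite structures (it is invariant under iso, so it
   is the order of Omega_mu). *)
Definition fle (F G : fstruct) : Prop := embeds (fs F) (fs G).

(* A subset of Omega_mu is represented by its (iso-closed) predicate on
   fstruct.  Ideal: non-empty, downward closed, up-directed. *)
Definition ideal (P : fstruct -> Prop) : Prop :=
  (exists F, P F) /\
  (forall F G, P G -> fle F G -> P F) /\
  (forall F G, P F -> P G -> exists H, P H /\ fle F H /\ fle G H).

Definition amalgamation (P : fstruct -> Prop) : Prop :=
  forall (A A1 A2 : fstruct) (f1 : fs A -> fs A1) (f2 : fs A -> fs A2),
    P A -> P A1 -> P A2 -> embedding f1 -> embedding f2 ->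
    exists (B : fstruct) (g1 : fs A1 -> fs B) (g2 : fs A2 -> fs B),
      P B /\ embedding g1 /\ embedding g2 /\
      forall x, g1 (f1 x) = g2 (f2 x).

(* age(S): the finite structures (up to iso) that are isomorphic to an induced
   finite substructure of S, i.e. that embed into S. *)
Definition age (S : structure mu) (F : fstruct) : Prop := embeds (fs F) S.

End Defs.

(* Cardinality at most aleph_1: T carries a strict well-order all of whose
   proper initial segments are countable. *)
Definition countable_type (T : Type) : Prop :=
  exists f : T -> nat, injective f.

Definition card_le_aleph1 (T : Type) : Prop :=
  exists lt : T -> T -> Prop,
    well_founded lt /\ (forall x y z, lt x y -> lt y z -> lt x z) /\
    (forall x y, lt x y \/ x = y \/ lt y x) /\
    (forall t, countable_type {x : T | lt x t}).

(* |P| <= aleph_1 for a set P of isomorphism types: there is a family of at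
   most aleph_1 members of P meeting every isomorphism class of P. *)
Definition iso_types_le_aleph1 (I : Type) (mu : I -> nat)
    (P : fstruct mu -> Prop) : Prop :=
  exists (T : Type) (g : T -> fstruct mu),
    card_le_aleph1 T /\ (forall t, P (g t)) /\
    (forall F, P F -> exists t, iso F (g t)).

From Pilot Require Import Defs.
From mathcomp Require Import all_boot.
From Stdlib Require Import ClassicalEpsilon ProofIrrelevance FunctionalExtensionality.

(* Countable step: if C is countable, age C lies in P and F0 is in P, then C
   and F0 embed into a countable L whose age lies in P.  Write C as the union
   of an increasing chain of finite substructures A_k, start with B_0 = F0
   and amalgamate A_k -> A_(k+1) with A_k -> B_k to get B_(k+1); L is the
   union of the B_k.  At k = 0 this amalgamates over the empty structure.

   Transfinite step: list the isomorphism types of P as g t along a well-order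
   of T whose proper initial segments are countable, and at stage t apply the
   countable step to the union of the earlier stages and g t.  Each stage is
   countable, every g t embeds into the final union, and every finite
   substructure of the union already lies in some stage, so its age is P. *)

Set Implicit Arguments.
Unset Strict Implicit.
Unset Printing Implicit Defensive.

Lemma sval_inj (A : Type) (Q : A -> Prop) : injective (@sval A Q).
Proof. exact: eq_sig_hprop (fun x => proof_irrelevance (Q x)). Qed.

Lemma map_tuple_comp (A B C : Type) (f : A -> B) (g : B -> C) n (t : n.-tuple A) :
  map_tuple (g \o f) t = map_tuple g (map_tuple f t).
Proof. by apply: val_inj; rewrite /= map_comp. Qed.

Lemma eq_map_tuple (A B : Type) (f g : A -> B) n (t : n.-tuple A) :
  f =1 g -> map_tuple f t = map_tuple g t.
Proof. by move=> fg; apply: val_inj; apply: eq_map. Qed.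

Lemma map_tuple_id (A : Type) n (t : n.-tuple A) : map_tuple id t = t.
Proof. by apply: val_inj; rewrite /= map_id. Qed.

Lemma inj_map_tuple (A B : Type) (f : A -> B) n (t1 t2 : n.-tuple A) :
  injective f -> map f t1 = map f t2 -> t1 = t2.
Proof. by move=> f_inj /(inj_map f_inj) /val_inj. Qed.

Lemma map_tuple_onto (A B : Type) (f : A -> B) n (t : n.-tuple B) :
  (forall y, List.In y t -> exists x, f x = y) ->
  exists t' : n.-tuple A, map_tuple f t' = t.
Proof.
move=> onto; have [s' fs'] : exists s', map f s' = t.
  move: (tval t) onto; elim=> [|y s IHs] in_onto; first by exists [::].
  have [x <-] := in_onto y (or_introl erefl).
  have [s' <-] := IHs (fun z zs => in_onto z (or_intror zs)).
  by exists (x :: s').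
have size_s' : size s' == n by rewrite -(size_map f) fs' size_tuple.
by exists (Tuple size_s'); apply: val_inj.
Qed.

Lemma In_tnth (T : Type) (s : seq T) x :
  List.In x s <-> exists i : 'I_(size s), tnth (in_tuple s) i = x.
Proof.
split=> [|[[i lt_i_s] <-]].
  elim: s => [|y s IHs] //= [<-|/IHs [i <-]]; first by exists ord0.
  by exists (lift ord0 i); rewrite !(tnth_nth x).
rewrite (tnth_nth x) /=; elim: s i lt_i_s => [|y s IHs] [|i] //= lt_i_s.
- by left.
- by right; apply: IHs.
Qed.

Lemma ord0_False (i : 'I_0) : False.
Proof. by case: i. Qed.

Lemma In_mem (T : eqType) (x : T) (s : seq T) : x \in s -> List.In x s.
Proof.
elim: s => [|y s IHs] //=; rewrite in_cons => /orP [/eqP ->|/IHs xs]; [by left|by right].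
Qed.

Lemma seq_code_bound (T : Type) (c : T -> nat) (s : seq T) :
  exists k, forall x, List.In x s -> c x < k.
Proof.
elim: s => [|y s [k ltk]]; first by exists 0.
exists (maxn k (c y).+1) => x /= [<-|/ltk lt_x_k]; rewrite leq_max.
  by rewrite leqnn orbT.
by rewrite lt_x_k.
Qed.

Lemma notin_map_lt (T : Type) (c : T -> nat) k (s : seq T) :
  (forall x, List.In x s -> c x < k) -> k \notin map c s.
Proof.
elim: s => [|y s IHs] //= lt_k; rewrite in_cons negb_or eq_sym neq_ltn lt_k //=; last by left.
by apply: IHs => x xs; apply: lt_k; right.
Qed.

Section Embeddings.
Variables (I : Type) (mu : I -> nat).

Lemma embedding_id (X : structure mu) : embedding (@id X).
Proof. by split=> // i t; rewrite map_tuple_id. Qed.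

Lemma embedding_comp (X Y Z : structure mu) (f : X -> Y) (g : Y -> Z) :
  embedding f -> embedding g -> embedding (g \o f).
Proof.
move=> [f_inj f_rel] [g_inj g_rel]; split; first exact: inj_comp.
by move=> i t; rewrite map_tuple_comp f_rel.
Qed.

Lemma embeds_trans (X Y Z : structure mu) : embeds X Y -> embeds Y Z -> embeds X Z.
Proof. by move=> [f f_emb] [g g_emb]; exists (g \o f); apply: embedding_comp. Qed.

Lemma embedding_factor (X Y Z : structure mu) (f : X -> Y) (a : X -> Z) (b : Y -> Z) :
  embedding a -> embedding b -> b \o f =1 a -> embedding f.
Proof.
move=> [a_inj a_rel] [b_inj b_rel] bfa; split.
  by move=> x y fxy; apply: a_inj; rewrite -!bfa /= fxy.
by move=> i t; rewrite a_rel b_rel -map_tuple_comp (eq_map_tuple t bfa).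
Qed.

(* Positive arities are needed: a 0-ary relation could tell empty structures apart. *)
Lemma embedding_from_empty (F : fstruct mu) (X : structure mu) (f : fs F -> X) :
  (forall i, 0 < mu i) -> projT1 F = 0 -> embedding f.
Proof.
case: F f => n R /= f mu_pos n0; subst n; split=> [[]|i t] //.
by case: (tnth t (Ordinal (mu_pos i))).
Qed.

Lemma empty_fstruct_in (P : fstruct mu -> Prop) (F0 F : fstruct mu) :
  (forall i, 0 < mu i) -> (forall F G, P G -> fle F G -> P F) -> P F0 ->
  projT1 F = 0 -> P F.
Proof.
move=> mu_pos P_down PF0 F_empty; apply: P_down PF0 _.
exists (fun i => False_rect _ (ord0_False (cast_ord F_empty i))).
exact: embedding_from_empty.
Qed.

End Embeddings.

Section PartialStructures.
Variables (I : Type) (mu : I -> nat) (V : Type).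

(* Structures with points in a fixed universe [V], so that unions of chains
   are literal unions. *)
Record pstruct := PStruct { pdom : V -> Prop; prel : I -> seq V -> Prop }.

Definition struct_of (Y : pstruct) : structure mu :=
  @Structure I mu {u | pdom Y u} (fun i t => prel Y i (map sval t)).

Definition extends (Y' Y : pstruct) :=
  (forall u, pdom Y u -> pdom Y' u) /\
  forall i (t : (mu i).-tuple V), (forall u, List.In u t -> pdom Y u) ->
    (prel Y' i t <-> prel Y i t).

Lemma extends_refl Y : extends Y Y.
Proof. by []. Qed.

Lemma extends_trans Y1 Y2 Y3 : extends Y3 Y2 -> extends Y2 Y1 -> extends Y3 Y1.
Proof.
move=> [dom32 rel32] [dom21 rel21]; split=> [u /dom21 /dom32 //|i t t_in].
by rewrite rel32 ?rel21 // => u /t_in /dom21.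
Qed.

Lemma In_map_sval (Q : V -> Prop) n (t : n.-tuple {u | Q u}) u :
  List.In u (map sval t) -> Q u.
Proof. by move=> /List.in_map_iff [[x Qx] [/= <-]]. Qed.

Definition extends_in Y' Y (E : extends Y' Y) (p : struct_of Y) : struct_of Y' :=
  exist _ (sval p) (E.1 _ (svalP p)).

Lemma extends_in_embedding Y' Y (E : extends Y' Y) : embedding (extends_in E).
Proof.
split=> [p q /(f_equal sval) /= /sval_inj //|i t /=].
by rewrite -map_comp; symmetry; apply: (E.2 i (map_tuple sval t)); apply: In_map_sval.
Qed.

Lemma restrict_embeds Y' Y (X : structure mu) (f : X -> struct_of Y') :
  extends Y' Y -> embedding f -> (forall x, pdom Y (sval (f x))) ->
  embeds X (struct_of Y).
Proof.
move=> E [f_inj f_rel] fY.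
exists (fun x => exist _ (sval (f x)) (fY x) : struct_of Y); split.
  by move=> x y /(f_equal sval) /= /sval_inj /f_inj.
move=> i t; rewrite f_rel /= -!map_comp.
apply: (E.2 i (map_tuple (sval \o f) t)).
by move=> u /= /List.in_map_iff [x [<- _]]; apply: fY.
Qed.

Definition image (S : structure mu) (theta : S -> V) : pstruct :=
  PStruct (fun u => exists x, theta x = u)
    (fun i s => exists t : (mu i).-tuple S, map theta t = s /\ Defs.rel t).

Section Image.
Variables (S : structure mu) (theta : S -> V).
Hypothesis theta_inj : injective theta.

Definition image_in (x : S) : struct_of (image theta) :=
  exist _ (theta x) (ex_intro _ x erefl).

Definition image_out (p : struct_of (image theta)) : S :=
  sval (constructive_indefinite_description _ (svalP p)).

Lemma image_outK p : theta (image_out p) = sval p.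
Proof. by rewrite /image_out; case: constructive_indefinite_description. Qed.

Lemma image_in_embedding : embedding image_in.
Proof.
split=> [x y /(f_equal sval) /theta_inj //|i t /=].
rewrite -map_comp; split=> [t_rel|[t' [tt' t'_rel]]]; first by exists t.
by rewrite -(inj_map_tuple theta_inj tt').
Qed.

Lemma image_out_embedding : embedding image_out.
Proof.
apply: embedding_factor (embedding_id _) image_in_embedding _ => p.
by apply: sval_inj; rewrite /= image_outK.
Qed.

Lemma image_age F : age (struct_of (image theta)) F -> age S F.
Proof. by move/embeds_trans; apply; exists image_out; apply: image_out_embedding. Qed.

Lemma image_extends Y (e : struct_of Y -> S) :
  embedding e -> (forall p, theta (e p) = sval p) -> extends (image theta) Y.
Proof.
move=> [_ e_rel] theta_e; split=> [u Yu|i t t_in].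
  by exists (e (exist _ u Yu)); rewrite theta_e.
have [tY <-] := map_tuple_onto (f := sval) (fun y Yy => ex_intro _ (exist _ y (t_in y Yy)) erefl).
rewrite [prel Y i _](e_rel i tY); split=> [[t' [tt' t'_rel]]|tY_rel].
  suff <- : t' = map_tuple e tY by [].
  apply: (inj_map_tuple theta_inj); rewrite tt' /= -map_comp.
  by apply: eq_map => p; rewrite /= theta_e.
exists (map_tuple e tY); split=> //.
by rewrite /= -map_comp; apply: eq_map.
Qed.

End Image.

Section Union.
Variables (K : Type) (W : K -> pstruct).

Definition directed := forall s s', exists s'',
  extends (W s'') (W s) /\ extends (W s'') (W s').

Definition union : pstruct :=
  PStruct (fun u => exists s, pdom (W s) u)
    (fun i l => exists s, (forall u, List.In u l -> pdom (W s) u) /\ prel (W s) i l).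

Hypothesis W_directed : directed.

Lemma union_extends s : extends union (W s).
Proof.
split=> [u Wu|i t t_in]; first by exists s.
split=> [[s' [t_in' t_rel]]|t_rel]; last by exists s.
have [s'' [E E']] := W_directed s s'.
by rewrite -(E.2 i t t_in) (E'.2 i t t_in').
Qed.

Lemma union_dom_seq (l : seq V) : 0 < size l ->
  (forall u, List.In u l -> pdom union u) ->
  exists s, forall u, List.In u l -> pdom (W s) u.
Proof.
elim: l => [|u l IHl] // _ l_dom.
have [s Wu] := l_dom u (or_introl erefl).
case: l IHl l_dom => [|v l] IHl l_dom; first by exists s => _ [<-|[]].
have [s' l_in] := IHl isT (fun w wl => l_dom w (or_intror wl)).
have [s'' [E E']] := W_directed s s'.
by exists s'' => w [<-|/l_in /E'.1]; [apply: E.1|].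
Qed.

Lemma union_age (P : fstruct mu -> Prop) :
  (forall F, projT1 F = 0 -> P F) ->
  (forall s F, age (struct_of (W s)) F -> P F) ->
  forall F, age (struct_of union) F -> P F.
Proof.
move=> P_empty W_age F [f f_emb].
have [F_empty|F_pos] := posnP (projT1 F); first exact: P_empty.
have [s Wf] : exists s, forall u, List.In u (map (sval \o f) (enum 'I_(projT1 F))) ->
    pdom (W s) u.
  apply: union_dom_seq => [|u /List.in_map_iff [x [<- _]]]; last exact: svalP.
  by rewrite size_map size_enum_ord.
apply: W_age; apply: restrict_embeds (union_extends s) f_emb _ => x.
by apply: Wf; apply/List.in_map_iff; exists x; split=> //; apply: In_mem; rewrite mem_enum.
Qed.

End Union.

Lemma chain_directed (K : Type) (lt : K -> K -> Prop) (W : K -> pstruct) :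
  (forall s s', lt s s' \/ s = s' \/ lt s' s) ->
  (forall s s', lt s s' -> extends (W s') (W s)) -> directed W.
Proof.
move=> lt_total W_chain s s'.
case: (lt_total s s') => [lt_ss'|[<-|lt_s's]].
- by exists s'; split; [apply: W_chain|apply: extends_refl].
- by exists s; split; apply: extends_refl.
- by exists s; split; [apply: extends_refl|apply: W_chain].
Qed.

End PartialStructures.

Lemma extend_injection (X Y V : Type) (f : X -> Y) (a : X -> V) (b : Y -> V) :
  injective f -> injective a -> injective b -> (forall x y, a x <> b y) ->
  exists theta : Y -> V, [/\ injective theta, forall x, theta (f x) = a x &
    forall y, (exists x, theta y = a x) \/ theta y = b y].
Proof.
move=> f_inj a_inj b_inj ab_disj.
pose theta y := match excluded_middle_informative (exists x, f x = y) with
  | left in_range => a (sval (constructive_indefinite_description _ in_range))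
  | right _ => b y end.
have theta_range y : (exists x, f x = y /\ theta y = a x) \/
    (forall x, f x <> y) /\ theta y = b y.
  rewrite /theta; case: excluded_middle_informative => [in_range|out].
    by case: constructive_indefinite_description => x fx; left; exists x.
  by right; split=> // x fx; apply: out; exists x.
exists theta; split.
- move=> y y'; case: (theta_range y) => [[x [<- ->]]|[_ ->]];
    case: (theta_range y') => [[x' [<- ->]]|[_ ->]].
  + by move/a_inj ->.
  + by move/ab_disj.
  + by move/esym/ab_disj.
  + by move/b_inj.
- by move=> x; case: (theta_range (f x)) => [[x' [/f_inj <-]]|[/(_ x)]].
- by move=> y; case: (theta_range y) => [[x [_ ->]]|[_ ->]]; [left; exists x|right].
Qed.

Section CountableExhaustion.
Variables (I : Type) (mu : I -> nat) (C : structure mu) (c : C -> nat).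
Hypothesis c_inj : injective c.

Definition fsub (l : seq C) : fstruct mu :=
  existT (fun n => forall i, (mu i).-tuple 'I_n -> Prop) (size l)
    (fun i t => Defs.rel (map_tuple (tnth (in_tuple l)) t)).

Definition decode (j : nat) : option C :=
  match excluded_middle_informative (exists x, c x = j) with
  | left in_range => Some (sval (constructive_indefinite_description _ in_range))
  | right _ => None
  end.

Lemma decodeK x : decode (c x) = Some x.
Proof.
rewrite /decode; case: excluded_middle_informative => [in_range|[]]; last by exists x.
by case: constructive_indefinite_description => y /= /c_inj ->.
Qed.

Lemma decode_code j x : decode j = Some x -> c x = j.
Proof.
rewrite /decode; case: excluded_middle_informative => // in_range [<-].
by case: constructive_indefinite_description.
Qed.

Fixpoint enum_below k : seq C :=
  if k is k'.+1 then enum_below k' ++ seq_of_opt (decode k') else [::].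

Lemma code_lt_enum_below k x : List.In x (enum_below k) -> c x < k.
Proof.
elim: k => [|k IHk] //= /List.in_app_iff [/IHk /ltnW //|].
by case E: (decode k) => [y|] //= [<-|[]]; rewrite (decode_code E).
Qed.

Lemma In_enum_below k x : c x < k -> List.In x (enum_below k).
Proof.
elim: k => [|k IHk] //; rewrite ltnS leq_eqVlt => /orP [/eqP <-|/IHk x_in] /=.
  by apply/List.in_app_iff; right; rewrite decodeK; left.
by apply/List.in_app_iff; left.
Qed.

Lemma enum_below_prefix k k' : k <= k' -> exists s, enum_below k' = enum_below k ++ s.
Proof.
elim: k' => [|k' IHk']; first by rewrite leqn0 => /eqP ->; exists [::].
rewrite leq_eqVlt => /orP [/eqP ->|/IHk' [s def_k']]; first by exists [::]; rewrite cats0.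
by exists (s ++ seq_of_opt (decode k')); rewrite /= def_k' catA.
Qed.

Lemma size_enum_below_le k k' : k <= k' -> size (enum_below k) <= size (enum_below k').
Proof. by move/enum_below_prefix => [s ->]; rewrite size_cat leq_addr. Qed.

Lemma uniq_codes_enum_below k : uniq (map c (enum_below k)).
Proof.
elim: k => [|k IHk] //=; rewrite map_cat cat_uniq IHk /=.
case E: (decode k) => [x|] //=; rewrite (decode_code E) andbT orbF.
by apply: notin_map_lt; apply: code_lt_enum_below.
Qed.

Definition below k : fstruct mu := fsub (enum_below k).

Definition point k : fs (below k) -> C := tnth (in_tuple (enum_below k)).

Definition widen k k' (le_kk' : k <= k') : fs (below k) -> fs (below k') :=
  widen_ord (size_enum_below_le le_kk').

Definition incl k := widen (leqnSn k).

Lemma point_inj k : injective (@point k).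
Proof.
move=> i i' eq_ii'; apply/val_inj/eqP.
have x0 := point i.
rewrite -(nth_uniq (c x0) _ _ (uniq_codes_enum_below k)) ?size_map ?ltn_ord //.
rewrite !(nth_map x0) ?ltn_ord //; apply/eqP; congr c.
by move: eq_ii'; rewrite /point !(tnth_nth x0).
Qed.

Lemma point_embedding k : embedding (@point k).
Proof. by split; [apply: point_inj|]. Qed.

Lemma point_widen k k' (le_kk' : k <= k') i : point (widen le_kk' i) = point i.
Proof.
have [s def_k'] := enum_below_prefix le_kk'.
by rewrite /point !(tnth_nth (point i)) /= def_k' nth_cat ltn_ord.
Qed.

Lemma widen_embedding k k' (le_kk' : k <= k') : embedding (widen le_kk').
Proof. exact: embedding_factor (point_embedding k) (point_embedding k') (point_widen le_kk'). Qed.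

Lemma compatible_widen (Z : structure mu) (j : forall k, fs (below k) -> Z) :
  (forall k i, j k.+1 (incl i) = j k i) ->
  forall k k' (i : fs (below k)) (i' : fs (below k')),
    k <= k' -> val i = val i' -> j k' i' = j k i.
Proof.
move=> j_incl k k'; elim: k' => [|k' IHk'] in k * => i i' le_kk' eq_ii'.
  by move: le_kk'; rewrite leqn0 => /eqP k0; subst k; congr (j 0 _); apply: val_inj.
case: (ltngtP k k'.+1) le_kk' => // [lt_kk'|eq_kk'] _; last first.
  by subst k; congr (j _ _); apply: val_inj.
rewrite ltnS in lt_kk'.
have -> : i' = incl (widen lt_kk' i) by apply: val_inj.
by rewrite j_incl; apply: IHk'.
Qed.

Definition index_of x : fs (below (c x).+1) :=
  sval (constructive_indefinite_description _
    (proj1 (In_tnth _ _) (In_enum_below (ltnSn (c x))))).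

Lemma point_index_of x : point (index_of x) = x.
Proof. by rewrite /index_of; case: constructive_indefinite_description. Qed.

Lemma exhaustion_embeds (Z : structure mu) (j : forall k, fs (below k) -> Z) :
  (forall k, embedding (j k)) -> (forall k i, j k.+1 (incl i) = j k i) ->
  embeds C Z.
Proof.
move=> j_emb j_incl; pose phi x := j _ (index_of x).
have phi_point k i : phi (point i) = j k i.
  have le_k : (c (point i)).+1 <= k by apply: code_lt_enum_below; apply/In_tnth; exists i.
  have wi : widen le_k (index_of (point i)) = i.
    by apply: point_inj; rewrite point_widen point_index_of.
  by symmetry; apply: compatible_widen j_incl _ _ _ _ le_k (f_equal val wi).
have in_range (s : seq C) :
    exists k, forall x, List.In x s -> exists i : fs (below k), point i = x.
  by have [k ltk] := seq_code_bound c s; exists k => x /ltk /In_enum_below /In_tnth.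
exists phi; split.
  move=> x y; have [k onto] := in_range [:: x; y].
  have [ix <-] := onto x (or_introl erefl).
  have [iy <-] := onto y (or_intror (or_introl erefl)).
  by rewrite !phi_point => /(j_emb k).1 ->.
move=> i t; have [k onto] := in_range t; have [t' <-] := map_tuple_onto onto.
rewrite -(point_embedding k).2 -map_tuple_comp (eq_map_tuple t' (phi_point k)).
exact: (j_emb k).2.
Qed.

End CountableExhaustion.

Section CountableExtension.
Variables (I : Type) (mu : I -> nat) (P : fstruct mu -> Prop).
Hypothesis mu_pos : forall i, 0 < mu i.
Hypothesis P_down : forall F G, P G -> fle F G -> P F.
Hypothesis P_amalgamation : amalgamation P.
Variables (C : structure mu) (c : C -> nat) (F0 : fstruct mu).
Hypothesis c_inj : injective c.
Hypothesis C_age : forall F, age C F -> P F.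
Hypothesis PF0 : P F0.

Local Notation below := (below c).

Lemma P_below k : P (below k).
Proof. by apply: C_age; exists (point (c := c) (k := k)); apply: point_embedding. Qed.

(* Labels of stage [k] have first coordinate at most [k], so that the labels
   [(k.+1, _)] are fresh at the next stage. *)
Record stage k := Stage {
  stage_fs : fstruct mu;
  label : fs stage_fs -> nat * nat;
  cover : fs (below k) -> fs stage_fs;
  cover_embedding : embedding cover;
  label_inj : injective label;
  stage_P : P stage_fs;
  label_level : forall x, (label x).1 <= k }.
Arguments stage_fs {k} s.
Arguments label {k} s.
Arguments cover {k} s.
Arguments cover_embedding {k} s.
Arguments label_inj {k} s.
Arguments stage_P {k} s.
Arguments label_level {k} s.

Definition grows k (s : stage k) (s' : stage k.+1) :=
  exists e : fs (stage_fs s) -> fs (stage_fs s'),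
    [/\ embedding e, forall x, label s' (e x) = label s x &
        forall i, e (cover s i) = cover s' (incl i)].

Lemma stage_grows k (s : stage k) : exists s' : stage k.+1, grows s s'.
Proof.
have [B [g1 [g2 [PB [g1_emb [g2_emb g12]]]]]] := P_amalgamation
  (P_below k) (P_below k.+1) (stage_P s) (widen_embedding c (leqnSn k)) (cover_embedding s).
have fresh_inj : injective (fun y : fs B => (k.+1, val y)) by move=> y y' [/val_inj].
have fresh_disj x (y : fs B) : label s x <> (k.+1, val y).
  by move=> eq_xy; have := label_level s x; rewrite eq_xy ltnn.
have [theta [theta_inj theta_g2 theta_range]] :=
  extend_injection g2_emb.1 (label_inj s) fresh_inj fresh_disj.
have theta_level y : (theta y).1 <= k.+1.
  by case: (theta_range y) => [[x ->]|->] //; apply: leqW; apply: label_level.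
exists (Stage g1_emb theta_inj PB theta_level), g2; split=> // i.
by rewrite /= /incl g12.
Qed.

Definition next_stage k (s : stage k) : stage k.+1 :=
  sval (constructive_indefinite_description _ (stage_grows s)).

Definition first_stage : stage 0 :=
  @Stage 0 F0 (fun x => (0, val x)) (fun i => False_rect _ (ord0_False i))
    (@embedding_from_empty _ _ (below 0) _ _ mu_pos erefl)
    (fun x y eq_xy => val_inj (f_equal snd eq_xy)) PF0 (fun x => leqnn 0).

Fixpoint stage_at k : stage k :=
  if k is k'.+1 then next_stage (stage_at k') else first_stage.

Lemma stage_at_grows k : grows (stage_at k) (stage_at k.+1).
Proof. by rewrite /= /next_stage; case: constructive_indefinite_description. Qed.

Definition chain k := image (label (stage_at k)).

Lemma chain_extends_succ k : extends mu (chain k.+1) (chain k).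
Proof.
have [e [e_emb label_e _]] := stage_at_grows k.
have out_emb := image_out_embedding (label_inj (stage_at k)).
apply: (image_extends (label_inj (stage_at k.+1)) (embedding_comp out_emb e_emb)).
by move=> p; rewrite /= label_e image_outK.
Qed.

Lemma chain_directed_nat : directed mu chain.
Proof.
apply: (chain_directed (lt := fun k k' => k < k')) => [k k'|k]; first by case: ltngtP; auto.
elim=> [|k' IHk'] //; rewrite ltnS leq_eqVlt => /orP [/eqP <-|/IHk' ext_k'].
  exact: chain_extends_succ.
exact: extends_trans (chain_extends_succ k') ext_k'.
Qed.

Definition limit := struct_of mu (union chain).

Definition limit_in k (x : fs (stage_fs (stage_at k))) : limit :=
  extends_in (union_extends chain_directed_nat k) (image_in (label (stage_at k)) x).

Lemma limit_in_embedding k : embedding (@limit_in k).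
Proof.
exact: embedding_comp (image_in_embedding (label_inj _)) (extends_in_embedding _).
Qed.

Lemma limit_age F : age limit F -> P F.
Proof.
move: F; apply: (union_age chain_directed_nat) => [|k G /(image_age (label_inj _)) G_k].
  by move=> F; apply: empty_fstruct_in mu_pos P_down PF0.
exact: P_down (stage_P (stage_at k)) G_k.
Qed.

Lemma countable_extension : exists (L : structure mu) (cL : L -> nat),
  [/\ injective cL, embeds C L, embeds (fs F0) L & forall G, age L G -> P G].
Proof.
exists limit, (pickle \o sval); split.
- exact: inj_comp (pcan_inj (@pickleK _)) (@sval_inj _ _).
- apply: (exhaustion_embeds c_inj (j := fun k => @limit_in k \o cover (stage_at k))).
    by move=> k; apply: embedding_comp (cover_embedding _) (limit_in_embedding k).
  move=> k i; apply: sval_inj => /=.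
  have [e [_ label_e <-]] := stage_at_grows k.
  exact: label_e.
- by exists (@limit_in 0); exact: (limit_in_embedding 0).
- exact: limit_age.
Qed.

End CountableExtension.

Section Tower.
Variables (I : Type) (mu : I -> nat) (P : fstruct mu -> Prop).
Hypothesis mu_pos : forall i, 0 < mu i.
Hypothesis P_down : forall F G, P G -> fle F G -> P F.
Hypothesis P_amalgamation : amalgamation P.
Hypothesis P_empty : forall F, projT1 F = 0 -> P F.
Variables (T : Type) (lt : T -> T -> Prop).
Hypothesis lt_wf : well_founded lt.
Hypothesis lt_trans : forall x y z, lt x y -> lt y z -> lt x z.
Hypothesis lt_total : forall x y, lt x y \/ x = y \/ lt y x.
Hypothesis lt_countable : forall t, countable_type {x | lt x t}.

Lemma lt_irrefl t : ~ lt t t.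
Proof. by elim: (lt_wf t) => s _ IHs lt_ss; exact: (IHs s lt_ss lt_ss). Qed.

(* The points added at stage [t] get labels [(t, n)]; hence everything built
   before stage [t] is countable. *)
Definition good_extension t (Y : pstruct I (T * nat)) F Y' :=
  [/\ extends mu Y' Y, forall u, pdom Y' u -> lt u.1 t \/ u.1 = t,
      forall G, age (struct_of mu Y') G -> P G & embeds (fs F) (struct_of mu Y')].

Lemma good_extension_exists t (Y : pstruct I (T * nat)) F :
  (forall u, pdom Y u -> lt u.1 t) -> (forall G, age (struct_of mu Y) G -> P G) ->
  P F -> exists Y', good_extension t Y F Y'.
Proof.
move=> Y_below Y_age PF.
have [f f_inj] := lt_countable t.
pose code (p : struct_of mu Y) :=
  pickle (f (exist _ (sval p).1 (Y_below _ (svalP p))), (sval p).2).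
have code_inj : injective code.
  move=> [[s n] Ys] [[s' n'] Ys'] /(pcan_inj (@pickleK _)) [/f_inj [eq_ss'] eq_nn'].
  by apply: sval_inj; rewrite /= eq_ss' eq_nn'.
have [L [cL [cL_inj [phi phi_emb] F_L L_age]]] :=
  countable_extension mu_pos P_down P_amalgamation code_inj Y_age PF.
have fresh_inj : injective (fun z : L => (t, cL z)) by move=> z z' [/cL_inj].
have fresh_disj (p : struct_of mu Y) z : sval p <> (t, cL z).
  by move=> eq_p; have := Y_below _ (svalP p); rewrite eq_p; apply: lt_irrefl.
have [theta [theta_inj theta_phi theta_range]] :=
  extend_injection phi_emb.1 (@sval_inj _ _) fresh_inj fresh_disj.
exists (image theta); split.
- exact: (image_extends (Y := Y) theta_inj phi_emb theta_phi).
- move=> _ [z <-]; case: (theta_range z) => [[p ->]|-> /=]; last by right.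
  by left; apply: Y_below (svalP p).
- by move=> G /(image_age theta_inj) /L_age.
- apply: embeds_trans F_L _; exists (image_in theta); exact: image_in_embedding.
Qed.

Definition extend_at t Y F : pstruct I (T * nat) :=
  epsilon (inhabits Y) (good_extension t Y F).

Variable g : T -> fstruct mu.
Hypothesis Pg : forall t, P (g t).

Definition tower_step t (W : forall s, lt s t -> pstruct I (T * nat)) :=
  extend_at t (union (fun s : {s | lt s t} => W (sval s) (svalP s))) (g t).

Definition tower : T -> pstruct I (T * nat) := Fix lt_wf _ tower_step.

Definition tower_below t := union (fun s : {s | lt s t} => tower (sval s)).

Lemma tower_unfold t : tower t = extend_at t (tower_below t) (g t).
Proof.
rewrite /tower Fix_eq // => t' W W' eq_WW'.
by congr extend_at; congr union; apply: functional_extensionality => -[s ls] /=.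
Qed.

Lemma tower_spec t : good_extension t (tower_below t) (g t) (tower t) /\
  forall s, lt s t -> extends mu (tower t) (tower s).
Proof.
elim/(well_founded_ind lt_wf): t => t IHt.
have below_directed : directed mu (fun s : {s | lt s t} => tower (sval s)).
  apply: (chain_directed (lt := fun s s' => lt (sval s) (sval s'))).
    move=> s s'; case: (lt_total (sval s) (sval s')) => [|[/sval_inj|]]; auto.
  by move=> [s ls] [s' ls'] /= lss'; apply: (IHt s' ls').2.
have good : good_extension t (tower_below t) (g t) (tower t).
  rewrite tower_unfold; apply: epsilon_spec; apply: good_extension_exists (Pg t).
    move=> u [[s ls] /= dom_u]; have [[_ level _ _] _] := IHt s ls.
    by case: (level u dom_u) => [lt_us|->] //; apply: lt_trans lt_us ls.
  apply: (union_age below_directed P_empty) => -[s ls] G.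
  by have [[_ _ age_s _] _] := IHt s ls; apply: age_s.
split=> // s ls; have [ext_t _ _ _] := good.
exact: extends_trans ext_t (union_extends below_directed (exist _ s ls)).
Qed.

Lemma tower_directed : directed mu tower.
Proof. by apply: chain_directed lt_total _ => s t /(proj2 (tower_spec t)). Qed.

Definition tower_limit := struct_of mu (union tower).

Lemma tower_limit_age F : age tower_limit F -> P F.
Proof.
move: F; apply: (union_age tower_directed P_empty) => t.
by have [[_ _ age_t _] _] := tower_spec t.
Qed.

Lemma embeds_tower_limit t : embeds (fs (g t)) tower_limit.
Proof.
have [[_ _ _ g_t] _] := tower_spec t; apply: embeds_trans g_t _.
by exists (extends_in (union_extends tower_directed t)); apply: extends_in_embedding.
Qed.

End Tower.

Theorem corollary2 (I : Type) (mu : I -> nat) (P : fstruct mu -> Prop) :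
  (forall i, 0 < mu i) ->
  ideal P -> amalgamation P -> iso_types_le_aleph1 P ->
  exists S : structure mu, forall F : fstruct mu, age S F <-> P F.
Proof.
move=> mu_pos [[F0 PF0] [P_down _]] P_amalgamation.
move=> [T [g [[lt [lt_wf [lt_trans [lt_total lt_countable]]]] [Pg g_covers]]]].
have P_empty F : projT1 F = 0 -> P F by apply: empty_fstruct_in mu_pos P_down PF0.
exists (tower_limit P lt_wf g) => F; split; first by apply: tower_limit_age.
move=> /g_covers [t [f [f_emb _]]]; apply: embeds_trans (ex_intro _ f f_emb) _.
by apply: embeds_tower_limit.
Qed.
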